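(* Let $x \in \mathbb{R}^n$ be a deterministic clean signal, $y \in \mathbb{R}^n$ a deterministic vector of noisy data, and $f:\mathbb{R}^n \to \mathbb{R}^n$ a denoiser. Let $\tilde a, \tilde b, \tilde c$ be random vectors in $\mathbb{R}^n$ (the noisy references) such that (1) all entries of $\tilde a, \tilde b, \tilde c$ (i.e. the $3n$ random variables $\tilde a_i, \tilde b_i, \tilde c_i$, $1\le i\le n$) are mutually independent; (2) $\mathbb{E}[\tilde a_i] = \mathbb{E}[\tilde b_i] = \mathbb{E}[\tilde c_i] = x_i$ for $1 \le i \le n$; and, for each $i$, $\tilde a_i, \tilde b_i, \tilde c_i$ have the same finite variance. Define $$\mathrm{MSE} := \frac{1}{n}\sum_{i=1}^n (x_i - f(y)_i)^2, \qquad \widetilde{\mathrm{uMSE}} := \frac{1}{n}\sum_{i=1}^n \left[(\tilde a_i - f(y)_i)^2 - \frac{(\tilde b_i - \tilde c_i)^2}{2}\right].$$ Then $\mathbb{E}[\widetilde{\mathrm{uMSE}}] = \mathrm{MSE}$.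
   Context: The clean signal $x$, the data $y$ and hence the denoised estimate $f(y)$ are deterministic; only the references $\tilde a,\tilde b,\tilde c$ are random. *)

From HB Require Import structures.
From mathcomp Require Import all_boot all_order all_algebra.
From mathcomp Require Import all_classical all_reals all_analysis.
Set Implicit Arguments. Unset Strict Implicit. Unset Printing Implicit Defensive.
Import Order.TTheory GRing.Theory Num.Theory.
Local Open Scope classical_set_scope.
Local Open Scope ring_scope.

Definition mutually_independent d (T : measurableType d) (R : realType)
  (P : probability T R) (I : finType) (X : I -> {RV P >-> R}) : Prop :=
  forall (J : {set I}) (B : I -> set R), (forall i, measurable (B i)) ->
    P (\bigcap_(i in [set i | i \in J]) (X i @^-1` B i)) =
    (\prod_(i in J) P (X i @^-1` B i))%E.

Definition refs_family d (T : measurableType d) (R : realType)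
  (P : probability T R) (n : nat) (a b c : 'I_n -> {RV P >-> R}) :
  ('I_n + 'I_n + 'I_n)%type -> {RV P >-> R} :=
  fun s => match s with
           | inl (inl i) => a i
           | inl (inr i) => b i
           | inr i => c i
           end.

Definition MSE (R : realType) (n : nat) (x fy : 'I_n -> R) : R :=
  n%:R^-1 * \sum_(i < n) (x i - fy i) ^+ 2.

Definition uMSE_tilde d (T : measurableType d) (R : realType) (n : nat)
  (a b c : 'I_n -> T -> R) (fy : 'I_n -> R) : T -> R :=
  fun w => n%:R^-1 *
    \sum_(i < n) ((a i w - fy i) ^+ 2 - (b i w - c i w) ^+ 2 / 2).

From HB Require Import structures.
From mathcomp Require Import all_boot all_order all_algebra.
From mathcomp Require Import all_classical all_reals all_analysis.
From mathcomp Require Import measurable_realfun ring.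
Set Implicit Arguments. Unset Strict Implicit. Unset Printing Implicit Defensive.
Import Order.TTheory GRing.Theory Num.Theory.
Local Open Scope classical_set_scope.
Local Open Scope ring_scope.

(* For each i, E[(a_i - f(y)_i)^2] = Var a_i + (x_i - f(y)_i)^2, while b_i and
   c_i, being independent with the same mean, are uncorrelated, so that
   E[(b_i - c_i)^2] = Var(b_i - c_i) = Var b_i + Var c_i = 2 Var a_i.  The variance
   terms cancel and linearity of expectation gives E[uMSE~] = MSE.  Independence
   is used only through E[X Y] = E[X] E[Y]: the joint law of (X, Y) agrees with the
   product of the marginal laws on measurable rectangles, hence everywhere, and
   Fubini's theorem splits the integral of x y against it. *)

Lemma LfunB d (T : measurableType d) (R : realType) (mu : {measure set T -> \bar R})
    (p : \bar R) (f g : T -> R) :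
  (1 <= p)%E -> f \in Lfun mu p -> g \in Lfun mu p -> (f \- g)%R \in Lfun mu p.
Proof. by move=> p1 fp gp; rewrite rpredB. Qed.

Definition pairRV d (T : measurableType d) (R : realType) (X Y : {mfun T >-> R}) :
  T -> R * R := fun w => (X w, Y w).

Section pairRV.
Context d (T : measurableType d) (R : realType) (X Y : {mfun T >-> R}).

Lemma measurable_pairRV : measurable_fun setT (pairRV X Y).
Proof. exact: measurable_fun_pair. Qed.

HB.instance Definition _ :=
  isMeasurableFun.Build _ _ _ _ (pairRV X Y) measurable_pairRV.

End pairRV.

Section independence.
Local Open Scope ereal_scope.
Context d (T : measurableType d) (R : realType) (P : probability T R).

Let Pfin : P setT \is a fin_num := fin_num_measure P _ measurableT.

Definition independent_RVs2 (X Y : {RV P >-> R}) : Prop :=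
  forall A B, measurable A -> measurable B ->
    P (X @^-1` A `&` Y @^-1` B) = P (X @^-1` A) * P (Y @^-1` B).

Lemma distribution_pairRV (X Y : {RV P >-> R}) : independent_RVs2 X Y ->
  forall Z, measurable Z ->
  (distribution P X \x distribution P Y) Z = distribution P (pairRV X Y) Z.
Proof.
move=> XY; apply: product_measure_unique => A B mA mB.
by rewrite /distribution /pushforward -XY.
Qed.

Lemma expectation_distribution (X : {RV P >-> R}) : (X : T -> R) \in Lfun P 1 ->
  'E_P[X] = \int[distribution P X]_r r%:E.
Proof.
move=> /Lfun1_integrable X1.
by rewrite unlock integral_distribution //; exact: measurable_EFinP.
Qed.

Lemma integrable_distribution (X : {RV P >-> R}) : (X : T -> R) \in Lfun P 1 ->
  (distribution P X).-integrable setT EFin.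
Proof.
move=> /Lfun1_integrable X1.
by apply: integrable_pushforward => //; exact: measurable_EFinP.
Qed.

Lemma expectationM_indep (X Y : {RV P >-> R}) : independent_RVs2 X Y ->
  (X : T -> R) \in Lfun P 2%:E -> (Y : T -> R) \in Lfun P 2%:E ->
  'E_P[(X : T -> R) * Y] = 'E_P[X] * 'E_P[Y].
Proof.
move=> XY X2 Y2.
have X1 := Lfun_subset12 Pfin X2; have Y1 := Lfun_subset12 Pfin Y2.
have /Lfun1_integrable XY1 := Lfun2_mul_Lfun1 X2 Y2.
pose mu := distribution P X; pose nu := distribution P Y.
pose g : R * R -> \bar R := fun z => (z.1 * z.2)%:E.
have mg : measurable_fun setT g.
  by apply/measurable_EFinP; exact: measurable_funM.
have prodE h : \int[mu \x nu]_z h z = \int[distribution P (pairRV X Y)]_z h z.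
  by apply: eq_measure_integral => Z mZ _; exact: distribution_pairRV.
have ig : (mu \x nu).-integrable setT g.
  apply/integrableP; split => //; rewrite prodE.
  have := integrable_pushforward (measurable_pairRV X Y) mg XY1 measurableT.
  by move=> /integrableP[].
rewrite (expectation_distribution X1) (expectation_distribution Y1).
transitivity (\int[mu \x nu]_z g z).
  by rewrite prodE unlock integral_distribution.
rewrite -integral12_prod_meas1 // /fubini_F /g.
under eq_integral => u _ do under eq_integral => v _ do rewrite /= EFinM.
under eq_integral => u _ do rewrite integralZl ?integrable_distribution //.
rewrite -(fineK (_ : \int[nu]_v v%:E \is a fin_num)).
  by rewrite integralZr ?integrable_distribution.
by rewrite -expectation_distribution // expectation_fin_num.
Qed.

Lemma covariance_indep (X Y : {RV P >-> R}) : independent_RVs2 X Y ->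
  (X : T -> R) \in Lfun P 2%:E -> (Y : T -> R) \in Lfun P 2%:E ->
  covariance P X Y = 0.
Proof.
move=> XY X2 Y2.
have X1 := Lfun_subset12 Pfin X2; have Y1 := Lfun_subset12 Pfin Y2.
rewrite covarianceE ?Lfun2_mul_Lfun1 // expectationM_indep // subee //.
by rewrite fin_numM ?expectation_fin_num.
Qed.

Lemma mutually_independent_RVs2 (I : finType) (X : I -> {RV P >-> R}) (i j : I) :
  mutually_independent X -> i != j -> independent_RVs2 (X i) (X j).
Proof.
move=> indX ij A B mA mB.
pose C k := if k == i then A else if k == j then B else setT.
have mC k : measurable (C k) by rewrite /C; case: ifP => // _; case: ifP.
have Ci : C i = A by rewrite /C eqxx.
have Cj : C j = B by rewrite /C eq_sym (negbTE ij) eqxx.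
have := indX [set i; j]%SET C mC.
rewrite big_setU1 ?big_set1 ?inE //= Ci Cj => <-; congr (P _).
apply/seteqP; split => [w [XA XB] k|w XC].
  by rewrite /= in_set2 => /orP[] /eqP->; rewrite ?Ci ?Cj.
have inJ k : k \in [set i; j]%SET -> X k w \in C k by move=> ?; apply/mem_set/XC.
by split; [rewrite -Ci | rewrite -Cj]; apply/set_mem/inJ; rewrite in_set2 eqxx ?orbT.
Qed.

End independence.

Section moments.
Local Open Scope ereal_scope.
Context d (T : measurableType d) (R : realType) (P : probability T R).

Let Pfin : P setT \is a fin_num := fin_num_measure P _ measurableT.

Lemma expectation_sqr (Z : T -> R) : Z \in Lfun P 2%:E ->
  'E_P[Z ^+ 2] = 'V_P[Z] + 'E_P[Z] ^+ 2.
Proof.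
move=> Z2; have Z1 := Lfun_subset12 Pfin Z2.
by rewrite varianceE // subeK // fin_numX // expectation_fin_num.
Qed.

Lemma expectation_sqr_subr_cst (A : T -> R) (m k : R) : A \in Lfun P 2%:E ->
  'E_P[A] = m%:E -> 'E_P[(A \- cst k) ^+ 2] = 'V_P[A] + ((m - k) ^+ 2)%:E.
Proof.
move=> A2 EA; have A1 := Lfun_subset12 Pfin A2.
have Ak2 : (A \- cst k)%R \in Lfun P 2%:E by rewrite LfunB ?Lfun_cst ?lee1n.
rewrite expectation_sqr // varianceB_cst_r // expectationB ?Lfun_cst //.
by rewrite EA expectation_cst -EFinB EFin_expe.
Qed.

Lemma expectation_sqr_sub_uncorrelated (B C : T -> R) :
  B \in Lfun P 2%:E -> C \in Lfun P 2%:E ->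
  covariance P B C = 0 -> 'E_P[B] = 'E_P[C] ->
  'E_P[(B \- C) ^+ 2] = 'V_P[B] + 'V_P[C].
Proof.
move=> B2 C2 BC0 EBC.
have B1 := Lfun_subset12 Pfin B2; have C1 := Lfun_subset12 Pfin C2.
rewrite expectation_sqr ?LfunB ?lee1n // varianceB // BC0 mule0 sube0.
by rewrite expectationB // EBC subee ?expectation_fin_num // expe2 mule0 adde0.
Qed.

End moments.

Section unbiased_risk.
Local Open Scope ereal_scope.
Context d (T : measurableType d) (R : realType) (P : probability T R).

Definition umse_term (A B C : T -> R) (k : R) : T -> R :=
  fun w => ((A w - k) ^+ 2 - (B w - C w) ^+ 2 / 2)%R.

Lemma umse_termE (A B C : T -> R) (k : R) :
  umse_term A B C k = ((A \- cst k) ^+ 2 \- 2^-1 \o* (B \- C) ^+ 2)%R.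
Proof. by apply/funext => w; rewrite /umse_term /= mulrC. Qed.

Lemma Lfun1_umse_term (A B C : T -> R) (k : R) :
  A \in Lfun P 2%:E -> B \in Lfun P 2%:E -> C \in Lfun P 2%:E ->
  umse_term A B C k \in Lfun P 1.
Proof.
move=> A2 B2 C2; rewrite umse_termE.
have Ak2 : (A \- cst k)%R \in Lfun P 2%:E by rewrite LfunB ?Lfun_cst ?lee1n.
have BC2 : (B \- C)%R \in Lfun P 2%:E by rewrite LfunB ?lee1n.
by rewrite rpredB ?Lfun_scale ?Lfun2_mul_Lfun1.
Qed.

Lemma expectation_umse_term (A B C : T -> R) (m k : R) :
  A \in Lfun P 2%:E -> B \in Lfun P 2%:E -> C \in Lfun P 2%:E ->
  'E_P[A] = m%:E -> 'E_P[B] = 'E_P[C] ->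
  'V_P[B] = 'V_P[A] -> 'V_P[C] = 'V_P[A] -> covariance P B C = 0 ->
  'E_P[umse_term A B C k] = ((m - k) ^+ 2)%:E.
Proof.
move=> A2 B2 C2 EA EBC VB VC BC0.
have Ak2 : (A \- cst k)%R \in Lfun P 2%:E by rewrite LfunB ?Lfun_cst ?lee1n.
have BC2 : (B \- C)%R \in Lfun P 2%:E by rewrite LfunB ?lee1n.
rewrite umse_termE expectationB ?Lfun_scale ?Lfun2_mul_Lfun1 //.
rewrite expectationZl ?Lfun2_mul_Lfun1 //.
rewrite (expectation_sqr_subr_cst _ A2 EA).
rewrite (expectation_sqr_sub_uncorrelated B2 C2 BC0 EBC).
rewrite VB VC -(fineK (variance_fin_num A2)) -EFinD.
by congr (_%:E); field.
Qed.

Lemma expectation_bigsum (I : finType) (F : I -> T -> R) :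
  (forall i, F i \in Lfun P 1) -> 'E_P[\sum_i F i] = \sum_i 'E_P[F i].
Proof.
move=> F1; rewrite -(big_map F predT id) expectation_sum ?big_map //.
by move=> _ /mapP[i _ ->].
Qed.

Lemma uMSE_tildeE (n : nat) (a b c : 'I_n -> T -> R) (fy : 'I_n -> R) :
  uMSE_tilde a b c fy = (n%:R^-1 \o* \sum_i umse_term (a i) (b i) (c i) (fy i))%R.
Proof. by apply/funext => w; rewrite /uMSE_tilde /= fct_sumE mulrC. Qed.

End unbiased_risk.

Theorem theorem4p1 (d : measure_display) (T : measurableType d) (R : realType)
  (P : probability T R) (n : nat)
  (x y : 'I_n -> R) (f : ('I_n -> R) -> ('I_n -> R))
  (a b c : 'I_n -> {RV P >-> R}) :
  mutually_independent (refs_family a b c) ->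
  (forall i, ('E_P[a i] = (x i)%:E /\ 'E_P[b i] = (x i)%:E /\
             'E_P[c i] = (x i)%:E)%E) ->
  (forall i, (a i : T -> R) \in Lfun P 2%:E /\ (b i : T -> R) \in Lfun P 2%:E /\
             (c i : T -> R) \in Lfun P 2%:E) ->
  (forall i, ('V_P[a i] = 'V_P[b i] /\ 'V_P[b i] = 'V_P[c i])%E) ->
  ('E_P[uMSE_tilde (fun i => (a i : T -> R)) (fun i => (b i : T -> R))
                  (fun i => (c i : T -> R)) (f y)] = (MSE x (f y))%:E)%E.
Proof.
move=> indep mean L2 var.
have term1 i : umse_term (a i) (b i) (c i) (f y i) \in Lfun P 1.
  by have [A2 [B2 C2]] := L2 i; exact: Lfun1_umse_term.
have termE i :
    ('E_P[umse_term (a i) (b i) (c i) (f y i)] = ((x i - f y i) ^+ 2)%:E)%E.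
  have [A2 [B2 C2]] := L2 i; have [EA [EB EC]] := mean i; have [VAB VBC] := var i.
  have bc : independent_RVs2 (b i) (c i).
    exact: (mutually_independent_RVs2 (i := inl (inr i)) (j := inr i) indep).
  apply: expectation_umse_term; rewrite ?covariance_indep ?EB ?EC ?VAB ?VBC //.
rewrite uMSE_tildeE expectationZl ?rpred_sum // expectation_bigsum //.
by under eq_bigr do rewrite termE; rewrite sumEFin /MSE EFinM.
Qed.
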